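(* Let $d\ge 2$ and let $K$ be a finite shellable pure $d$-dimensional abstract simplicial complex whose dual graph is a path graph. Then the 1-skeleton graph of $K$ is Hamiltonian.
   Context: A finite abstract simplicial complex is a finite set of nonempty finite sets closed under taking nonempty subsets; its facets are its maximal sets, and it is pure of dimension $d$ if all facets have $d+1$ elements. It is shellable if there is an ordering $x_1,\dots,x_n$ of its facets such that for every $k\ge 2$ the intersection of the complex generated by $x_k$ with the complex generated by $x_1,\dots,x_{k-1}$ is a shellable pure $(d-1)$-dimensional complex (the complex generated by a collection of sets is the set of all their nonempty subsets). The dual graph has the facets as vertices, two distinct facets being adjacent if they intersect in a $(d-1)$-simplex (a set of $d$ elements). The 1-skeleton graph has vertices the one-element sets and edges the two-element sets; it is Hamiltonian if it has a closed simple cycle through every vertex exactly once. *)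

From mathcomp Require Import all_boot.
Set Implicit Arguments. Unset Strict Implicit. Unset Printing Implicit Defensive.

Section Complexes.
Variable T : finType.

Definition is_complex (K : {set {set T}}) : Prop :=
  set0 \notin K /\
  forall A B : {set T}, A \in K -> B != set0 -> B \subset A -> B \in K.

Definition facets (K : {set {set T}}) : {set {set T}} :=
  [set F in K | [forall G in K, (F \subset G) ==> (G == F)]].

(* pure with all facets of cardinality m (i.e. dimension m-1) *)
Definition pure (m : nat) (K : {set {set T}}) : Prop :=
  forall F, F \in facets K -> #|F| = m.

Definition gen (C : seq {set T}) : {set {set T}} :=
  [set A : {set T} | (A != set0) && has (fun F : {set T} => A \subset F) C].

Fixpoint shellable (m : nat) (K : {set {set T}}) : Prop :=
  pure m K /\
  exists s : seq {set T},
    perm_eq s (enum (facets K)) /\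
    forall k, 0 < k < size s ->
      match m with
      | 0 => False
      | m'.+1 => shellable m' (gen [:: nth set0 s k] :&: gen (take k s))
      end.

Definition dual_adj (m : nat) (F G : {set T}) : Prop :=
  F != G /\ #|F :&: G| = m.-1.

Definition dual_is_path (m : nat) (K : {set {set T}}) : Prop :=
  exists s : seq {set T},
    perm_eq s (enum (facets K)) /\ 0 < size s /\
    forall i j, i < size s -> j < size s ->
      (dual_adj m (nth set0 s i) (nth set0 s j) <-> (i = j.+1 \/ j = i.+1)).

Definition skel_edge (K : {set {set T}}) (x y : T) : bool :=
  (x != y) && ([set x; y] \in K).

Definition skeleton_hamiltonian (K : {set {set T}}) : Prop :=
  exists c : seq T,
    uniq c /\ 3 <= size c /\
    (forall x, x \in c <-> [set x] \in K) /\
    cycle (skel_edge K) c.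

End Complexes.

From mathcomp Require Import all_boot zify.
Set Implicit Arguments. Unset Strict Implicit. Unset Printing Implicit Defensive.

(* List the facets F_0, ..., F_(n-1) along the dual path: consecutive facets
   share a ridge and non-consecutive ones do not.  Shellability makes the
   facets containing a given vertex v consecutive: if v lies in F_q and in a
   facet shelled before F_q, then v lies in a ridge of F_q shared with an
   earlier facet, which must be a path neighbour of F_q.  Hence F_(k+1) adds a
   single new vertex b to F_0, ..., F_k, and b can be spliced into a
   Hamiltonian cycle of the first k+1 facets between the ends x, y of a cycle
   edge inside F_k :&: F_(k+1).  Now b lies in F_(k+2), for otherwise F_k and
   F_(k+2) would share the ridge F_(k+1) minus b, and so does one of x, y, as
   F_(k+1) and F_(k+2) differ by one vertex; hence one of the new edges xb, by
   again lies in F_(k+1) :&: F_(k+2). *)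

Lemma shellable_pure (T : finType) m (L : {set {set T}}) :
  shellable m L -> pure m L.
Proof. by case: m => [|m] []. Qed.

Lemma facet_above (T : finType) (L : {set {set T}}) (A : {set T}) :
  A \in L -> exists2 F, F \in facets L & A \subset F.
Proof.
move=> AL; have LA : A \in [set B in L | A \subset B] by rewrite inE AL subxx.
case: (arg_maxnP (fun B : {set T} => #|B|) LA) => F FLA Fmax.
have /[!inE]/andP[FL AF] : F \in [set B in L | A \subset B] := FLA.
exists F => //; rewrite inE FL; apply/forall_inP => G GL; apply/implyP => FG.
have GLA : G \in [set B in L | A \subset B] by rewrite inE GL (subset_trans AF FG).
by rewrite eq_sym eqEcard FG; apply: Fmax GLA.
Qed.

Lemma path_clique (T : eqType) (e : rel T) (x : T) (p : seq T) :
  {in x :: p &, forall y z, y != z -> e y z} -> uniq (x :: p) -> path e x p.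
Proof.
elim: p x => [|y p IHp] x //= clique_e /andP[]; rewrite inE negb_or => /andP[neq_xy _] up.
rewrite clique_e ?inE ?eqxx ?orbT //= IHp // => u w uyp wyp.
by apply: clique_e; rewrite inE ?uyp ?wyp orbT.
Qed.

Lemma cycle_clique (T : eqType) (e : rel T) (c : seq T) :
  {in c &, forall y z, y != z -> e y z} -> uniq c -> 1 < size c -> cycle e c.
Proof.
case: c => [|x [|y p]] // clique_e uc _.
rewrite /cycle rcons_path path_clique //; apply: clique_e; rewrite ?mem_head //.
  exact: mem_last.
have last_yp : last y p \in y :: p := mem_last y p.
by case/andP: uc => xnyp _; apply: contraNneq xnyp => <-.
Qed.

Section DualPathShelling.

Variables (T : finType) (d : nat) (K : {set {set T}}) (s t : seq {set T}).

Local Notation n := (size s).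
Local Notation facet i := (nth set0 s i).
Local Notation rank i := (index (nth set0 s i) t).

Hypothesis K_complex : is_complex K.
Hypothesis K_pure : pure d.+1 K.
Hypothesis s_facets : perm_eq s (enum (facets K)).
Hypothesis s_dual_path : forall i j, i < n -> j < n ->
  (dual_adj d.+1 (facet i) (facet j) <-> i = j.+1 \/ j = i.+1).
Hypothesis t_facets : perm_eq t (enum (facets K)).
Hypothesis t_shelling : forall k, 0 < k < size t ->
  shellable d (gen [:: nth set0 t k] :&: gen (take k t)).
Hypothesis d_ge2 : 2 <= d.

Lemma facet_at_facets i : i < n -> facet i \in facets K.
Proof. by move=> lt_in; rewrite -mem_enum -(perm_mem s_facets) mem_nth. Qed.

Lemma facet_at_in_K i : i < n -> facet i \in K.
Proof. by move/facet_at_facets; rewrite inE => /andP[]. Qed.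

Lemma card_facet_at i : i < n -> #|facet i| = d.+1.
Proof. by move/facet_at_facets/K_pure. Qed.

Lemma facet_at_inj i j : i < n -> j < n -> facet i = facet j -> i = j.
Proof.
have us : uniq s by rewrite (perm_uniq s_facets) enum_uniq.
by move=> lt_in lt_jn /eqP; rewrite nth_uniq // => /eqP.
Qed.

Lemma facet_at_index F : F \in facets K -> exists2 i, i < n & facet i = F.
Proof.
move=> Ffac; have Fs : F \in s by rewrite (perm_mem s_facets) mem_enum.
by exists (index F s); rewrite ?index_mem ?nth_index.
Qed.

Lemma card_facetI_le i j : i < n -> j < n -> i != j -> #|facet i :&: facet j| <= d.
Proof.
move=> lt_in lt_jn; rewrite leqNgt; apply: contraNN => gt_d.
have eq_I : facet i :&: facet j = facet i.
  by apply/eqP; rewrite eqEcard subsetIl card_facet_at.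
suff /(facet_at_inj lt_in lt_jn) -> : facet i = facet j by [].
by apply/eqP; rewrite eqEcard -eq_I subsetIr /= eq_I !card_facet_at.
Qed.

Lemma facets_adjacent i j : i < n -> j < n -> i != j ->
  d <= #|facet i :&: facet j| -> i = j.+1 \/ j = i.+1.
Proof.
move=> lt_in lt_jn neq_ij ge_d; apply/(s_dual_path lt_in lt_jn); split.
  by apply: contraNneq neq_ij => /(facet_at_inj lt_in lt_jn) ->.
by apply/eqP; rewrite /= eqn_leq card_facetI_le.
Qed.

Lemma card_facetIS i : i.+1 < n -> #|facet i :&: facet i.+1| = d.
Proof.
by move=> lt_i1n; case: (s_dual_path (ltnW lt_i1n) lt_i1n) => _ /(_ (or_intror erefl)) [].
Qed.

Lemma card_facetDS i : i.+1 < n -> #|facet i.+1 :\: facet i| = 1.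
Proof. by move=> lt_i1n; rewrite cardsD setIC card_facetIS // card_facet_at // subSnn. Qed.

Lemma card_facetSD i : i.+1 < n -> #|facet i :\: facet i.+1| = 1.
Proof. by move=> lt_i1n; rewrite cardsD card_facetIS // card_facet_at ?subSnn // ltnW. Qed.

Lemma skel_edge_facet i x y :
  i < n -> x \in facet i -> y \in facet i -> x != y -> skel_edge K x y.
Proof.
move=> lt_in xi yi neq_xy; rewrite /skel_edge neq_xy.
apply: K_complex.2 (facet_at_in_K lt_in) _ _; last by rewrite subUset !sub1set xi yi.
by apply/set0Pn; exists x; rewrite !inE eqxx.
Qed.

Lemma vertex_in_facet x : [set x] \in K <-> exists2 i, i < n & x \in facet i.
Proof.
split=> [/facet_above[F /facet_at_index[i lt_in <-]]|[i lt_in xi]].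
  by rewrite sub1set; exists i.
apply: K_complex.2 (facet_at_in_K lt_in) _ _; last by rewrite sub1set.
by apply/set0Pn; exists x; rewrite inE.
Qed.

(* A vertex shared with an earlier facet is a vertex of the pure
   (d-1)-dimensional intersection complex, hence lies in one of its ridges. *)
Lemma shelling_ridge k v : 0 < k < size t -> v \in nth set0 t k ->
  has (fun H : {set T} => v \in H) (take k t) ->
  exists2 H, H \in take k t & (v \in H) && (d <= #|nth set0 t k :&: H|).
Proof.
move=> k_range vk /hasP[H0 H0k vH0].
have vL : [set v] \in gen [:: nth set0 t k] :&: gen (take k t).
  have v_neq0 : [set v] != set0 by apply/set0Pn; exists v; rewrite inE.
  rewrite inE /gen !inE v_neq0 /= sub1set vk /=.
  by apply/hasP; exists H0; rewrite ?sub1set.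
have [B BL vB] := facet_above vL.
have : B \in gen [:: nth set0 t k] :&: gen (take k t) by case/setIdP: BL.
rewrite /gen !inE => /andP[/andP[_ /=]]; rewrite orbF => Bk /andP[_ /hasP[H Hk BH]].
exists H => //; rewrite (subsetP BH v) ?(subsetP vB) ?inE //=.
rewrite -(shellable_pure (t_shelling k_range) BL).
by apply: subset_leq_card; rewrite subsetI Bk BH.
Qed.

Lemma facet_at_in_t i : i < n -> facet i \in t.
Proof. by move=> lt_in; rewrite (perm_mem t_facets) mem_enum facet_at_facets. Qed.

Lemma shelling_earlier_neighbour q r v : q < n -> r < n ->
  v \in facet q -> v \in facet r -> rank r < rank q ->
  exists q', [/\ q' < n, v \in facet q', rank q' < rank q & q = q'.+1 \/ q' = q.+1].
Proof.
move=> lt_qn lt_rn vq vr lt_rank.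
have qt := facet_at_in_t lt_qn.
have lt_qt : rank q < size t by rewrite index_mem.
have k_range : 0 < rank q < size t by rewrite lt_qt (leq_ltn_trans _ lt_rank).
have v_tq : v \in nth set0 t (rank q) by rewrite nth_index.
have earlier_r : has (fun H : {set T} => v \in H) (take (rank q) t).
  by apply/hasP; exists (facet r); rewrite // in_take ?facet_at_in_t.
have [H Hk /andP[vH]] := shelling_ridge k_range v_tq earlier_r; rewrite nth_index // => ge_d.
have Ht := mem_take Hk; rewrite in_take // in Hk.
have Hfac : H \in facets K by rewrite -mem_enum -(perm_mem t_facets).
have [q' lt_q'n facet_q'] := facet_at_index Hfac.
exists q'; rewrite facet_q'; split => //; apply: facets_adjacent; rewrite ?facet_q' //.
by apply: contraTneq Hk => ->; rewrite facet_q' ltnn.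
Qed.

Lemma vertex_facets_between v q r l : q < n -> r < n ->
  v \in facet q -> v \in facet r -> q <= l <= r -> v \in facet l.
Proof.
suff between N : forall q r, rank q + rank r < N -> q < n -> r < n ->
    v \in facet q -> v \in facet r ->
    forall l, (q <= l <= r) || (r <= l <= q) -> v \in facet l.
  by move=> lt_qn lt_rn vq vr qlr; apply: (between (rank q + rank r).+1 q r); rewrite ?qlr.
elim: N {q r l} => // N IHN.
have step q1 r1 : rank r1 < rank q1 -> rank q1 + rank r1 < N.+1 -> q1 < n -> r1 < n ->
    v \in facet q1 -> v \in facet r1 ->
    forall l, (q1 <= l <= r1) || (r1 <= l <= q1) -> v \in facet l.
  move=> lt_rank rank_N lt_q1n lt_r1n vq1 vr1 l between_l.
  have [q' [lt_q'n vq' lt_rank' adj]] := shelling_earlier_neighbour lt_q1n lt_r1n vq1 vr1 lt_rank.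
  have [-> //|neq_lq1] := eqVneq l q1.
  apply: (IHN q' r1) => //; lia.
move=> q1 r1 rank_N lt_q1n lt_r1n vq1 vr1 l between_l.
case: (ltngtP (rank q1) (rank r1)) => [lt_rank|lt_rank|eq_rank].
- by apply: (step r1 q1); rewrite // 1?addnC // orbC.
- exact: (step q1 r1).
have /(facet_at_inj lt_q1n lt_r1n) eq_qr1 : facet q1 = facet r1.
  by rewrite -(nth_index set0 (facet_at_in_t lt_q1n)) eq_rank nth_index ?facet_at_in_t.
by have -> : l = q1 by lia.
Qed.

Lemma new_vertex_fresh k b i : k.+1 < n -> facet k.+1 :\: facet k = [set b] ->
  i <= k -> b \notin facet i.
Proof.
move=> lt_k1n new_b le_ik.
have /setDP[bk1 bk] : b \in facet k.+1 :\: facet k by rewrite new_b set11.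
apply: contra bk => bi; apply: (vertex_facets_between (q := i) (r := k.+1)) => //.
  exact: leq_ltn_trans le_ik (ltnW lt_k1n).
by rewrite le_ik leqnSn.
Qed.

Lemma new_vertex_persists k b : k.+2 < n -> facet k.+1 :\: facet k = [set b] ->
  b \in facet k.+2.
Proof.
move=> lt_k2n new_b; apply/negPn/negP => bk2.
have : d <= #|facet k :&: facet k.+2|.
  rewrite -(card_facetIS lt_k2n); apply/subset_leq_card/subsetP => z.
  rewrite !inE => /andP[zk1 zk2]; rewrite zk2 andbT; apply/negPn/negP => zk.
  have : z \in facet k.+1 :\: facet k by rewrite inE zk zk1.
  by rewrite new_b inE => /eqP eq_zb; rewrite -eq_zb zk2 in bk2.
by case/facets_adjacent; rewrite // ?(ltnW (ltnW lt_k2n)) //; lia.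
Qed.

Lemma facet_keeps_one_of i x y : i.+1 < n -> x \in facet i -> y \in facet i ->
  x != y -> (x \in facet i.+1) || (y \in facet i.+1).
Proof.
move=> lt_i1n xi yi; have /eqP/cards1P[a gone] := card_facetSD lt_i1n.
apply: contraNT; rewrite negb_or => /andP[xi1 yi1].
have : x \in [set a] by rewrite -gone inE xi1 xi.
have : y \in [set a] by rewrite -gone inE yi1 yi.
by rewrite !inE => /eqP -> /eqP ->.
Qed.

Lemma prefix_vertices_succ k b z : k.+1 < n -> facet k.+1 :\: facet k = [set b] ->
  (exists2 i, i <= k.+1 & z \in facet i) <-> z = b \/ exists2 i, i <= k & z \in facet i.
Proof.
move=> lt_k1n new_b.
have /setDP[bk1 _] : b \in facet k.+1 :\: facet k by rewrite new_b set11.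
split=> [[i le_ik1 zi]|[->|[i le_ik zi]]].
- case: (ltngtP i k.+1) le_ik1 => // [lt_ik1 _|eq_ik1 _]; first by right; exists i.
  case: (boolP (z \in facet k)) => [zk|nzk]; first by right; exists k.
  have : z \in facet k.+1 :\: facet k by rewrite inE nzk -eq_ik1.
  by rewrite new_b inE => /eqP; left.
- by exists k.+1.
- by exists i; rewrite // leqW.
Qed.

(* The
   lemmas below also track {subset take 2 c <= facet k.+1}: the first edge of
   c lies in the next facet, so the next new vertex can be spliced into it. *)
Definition prefix_cycle k (c : seq T) : Prop :=
  [/\ uniq c, 3 <= size c, forall z, z \in c <-> exists2 i, i <= k & z \in facet i
    & cycle (skel_edge K) c].

Lemma prefix_cycle_rot k m c : prefix_cycle k c -> prefix_cycle k (rot m c).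
Proof.
by case=> uc sz memc cyc; split; rewrite ?rot_uniq ?size_rot ?rot_cycle // => z; rewrite mem_rot.
Qed.

Lemma prefix_cycle_base : 0 < n ->
  exists2 c, prefix_cycle 0 c & (1 < n -> {subset take 2 c <= facet 1}).
Proof.
move=> n_gt0.
have [x [y [x0 y0 neq_xy xy1]]] : exists x y, [/\ x \in facet 0, y \in facet 0,
    x != y & 1 < n -> x \in facet 1 /\ y \in facet 1].
  case: (ltnP 1 n) => [n_gt1|n_le1].
    have /card_gt1P[x [y [/setIP[x0 x1] /setIP[y0 y1] neq_xy]]] :
      1 < #|facet 0 :&: facet 1| by rewrite card_facetIS.
    by exists x, y.
  have /card_gt1P[x [y [x0 y0 neq_xy]]] : 1 < #|facet 0| by rewrite card_facet_at // ltnW.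
  by exists x, y; split=> //; rewrite ltnNge n_le1.
pose c := [:: x, y & enum (facet 0 :\: [set x; y])].
have mem_c z : (z \in c) = (z \in facet 0).
  rewrite !inE mem_enum !inE.
  have [->|_] := eqVneq z x; first by rewrite x0.
  by have [->|_] := eqVneq z y; rewrite ?eqxx ?orbT ?y0.
have uc : uniq c by rewrite /= !inE !mem_enum !inE !eqxx ?orbT /= orbF neq_xy enum_uniq.
have size_c : size c = d.+1.
  rewrite -(card_facet_at n_gt0) cardE; apply/perm_size/uniq_perm; rewrite ?enum_uniq //.
  by move=> z; rewrite mem_c mem_enum.
exists c; last by move=> /xy1[x1 y1] z; rewrite /= take0 !inE => /orP[] /eqP ->.
split=> //; first by rewrite size_c ltnS.
- move=> z; rewrite mem_c; split=> [z0|[i]]; first by exists 0.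
  by rewrite leqn0 => /eqP ->.
- apply: cycle_clique; rewrite ?size_c ?ltnS ?(ltnW d_ge2) // => u w uc' wc'.
  by apply: (skel_edge_facet n_gt0); rewrite -mem_c.
Qed.

Lemma prefix_cycle_succ k c : k.+1 < n -> prefix_cycle k c ->
  {subset take 2 c <= facet k.+1} ->
  exists2 c', prefix_cycle k.+1 c' & (k.+2 < n -> {subset take 2 c' <= facet k.+2}).
Proof.
move=> lt_k1n [uc sz memc cyc].
case: c uc sz memc cyc => [|x [|y rest]] // uc _ memc cyc head_k1.
have [xk1 yk1] : x \in facet k.+1 /\ y \in facet k.+1.
  by split; apply: head_k1; rewrite !inE eqxx ?orbT.
have neq_xy : x != y by move: uc; rewrite /= inE negb_or => /andP[/andP[]].
have /eqP/cards1P[b new_b] := card_facetDS lt_k1n.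
have /setDP[bk1 _] : b \in facet k.+1 :\: facet k by rewrite new_b set11.
have b_fresh : b \notin [:: x, y & rest].
  by apply/negP => /memc[i le_ik]; apply/negP; apply: new_vertex_fresh new_b le_ik.
have neq_xb : x != b by apply: contraNneq b_fresh => <-; rewrite mem_head.
have neq_by : b != y by apply: contraNneq b_fresh => ->; rewrite !inE eqxx orbT.
pose c' := [:: x, b, y & rest].
have perm_c' : perm_eq c' (b :: [:: x, y & rest]).
  by apply/permPl; exact: (perm_catCA [:: x] [:: b]).
have ham_c' : prefix_cycle k.+1 c'.
  split; rewrite ?(perm_uniq perm_c') ?(perm_size perm_c') ?cons_uniq ?b_fresh //.
  - move=> z; rewrite (perm_mem perm_c') in_cons (prefix_vertices_succ _ lt_k1n new_b).
    by rewrite -memc; split=> [/predU1P|[->|->]]; rewrite ?eqxx ?orbT //; tauto.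
  - move: cyc => /= /andP[_ ->].
    by rewrite !(skel_edge_facet lt_k1n) // eq_sym.
case: (ltnP k.+2 n) => [lt_k2n|le_nk2]; last by exists c' => //; rewrite ltnNge le_nk2.
have bk2 := new_vertex_persists lt_k2n new_b.
case/orP: (facet_keeps_one_of lt_k2n xk1 yk1 neq_xy) => [xk2|yk2].
  by exists c' => // _ z; rewrite /= !inE => /orP[] /eqP ->.
exists (rot 1 c'); first exact: prefix_cycle_rot.
by move=> _ z; rewrite /= take0 !inE => /orP[] /eqP ->.
Qed.

Lemma prefix_cycle_exists k : k < n ->
  exists2 c, prefix_cycle k c & (k.+1 < n -> {subset take 2 c <= facet k.+1}).
Proof.
elim: k => [|k IHk] lt_kn; first exact: prefix_cycle_base.
have [c ham_c head_c] := IHk (ltnW lt_kn).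
exact: prefix_cycle_succ ham_c (head_c lt_kn).
Qed.

End DualPathShelling.

Theorem mainTheorem5 (T : finType) (d : nat) (K : {set {set T}}) :
  2 <= d ->
  is_complex K ->
  pure d.+1 K ->
  shellable d.+1 K ->
  dual_is_path d.+1 K ->
  skeleton_hamiltonian K.
Proof.
move=> d_ge2 K_complex K_pure [_ [t [t_facets t_shelling]]] [s [s_facets [n_gt0 s_path]]].
have lt_last : (size s).-1 < size s by rewrite ltn_predL.
have [c [uc size_c mem_c cyc] _] :=
  prefix_cycle_exists K_complex K_pure s_facets s_path t_facets t_shelling d_ge2 lt_last.
exists c; split=> //; split=> //; split=> // z.
rewrite (vertex_in_facet K_complex s_facets) mem_c.
by split=> -[i le_i zi]; exists i => //; lia.
Qed.
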